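(* Let $\mathscr Q_n$ be a non-singular quadric in $\mathrm{PG}(n,2)$ of projective index $g\ge1$, let $0\le s<g$, and let $\alpha_s$ be an $s$-dimensional subspace contained in $\mathscr Q_n$. Then every generator of $\mathscr Q_n$ contains at least one point of type (ii).
   Context: A non-singular quadric $\mathscr Q_n$ in $\mathrm{PG}(n,2)$ is the point set of a non-degenerate quadric; its projective index $g$ is the largest dimension of a projective subspace contained in $\mathscr Q_n$, and the $g$-dimensional subspaces contained in $\mathscr Q_n$ are its generators. A point $X$ of $\mathscr Q_n$ has type (ii) (with respect to $\alpha_s$) if $X\notin\alpha_s$ and the $(s+1)$-space $\langle\alpha_s,X\rangle$ is contained in $\mathscr Q_n$. *)

From HB Require Import structures.
From mathcomp Require Import all_boot all_order all_algebra.
Set Implicit Arguments. Unset Strict Implicit. Unset Printing Implicit Defensive.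
Import GRing.Theory.
Local Open Scope ring_scope.

(* PG(n,2) is modelled on V = 'rV['F_2]_(n.+1); since the field is GF(2),
   projective points are exactly the nonzero vectors, and a projective
   subspace of dimension d is (the row space of) a matrix of rank d+1. *)

(* The quadratic form with coefficient matrix A : Q(x) = x A x^T.
   Every quadratic form over F_2 arises in this way. *)
Definition qf (n : nat) (A : 'M['F_2]_(n.+1)) (x : 'rV['F_2]_(n.+1)) : 'F_2 :=
  (x *m A *m x^T) 0 0.

Definition polar (n : nat) (A : 'M['F_2]_(n.+1)) (x y : 'rV['F_2]_(n.+1)) : 'F_2 :=
  qf A (x + y) - qf A x - qf A y.

Definition nonsingular (n : nat) (A : 'M['F_2]_(n.+1)) : Prop :=
  forall x : 'rV['F_2]_(n.+1), x != 0 -> qf A x = 0 ->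
    exists y, polar A x y != 0.

Definition contained (n : nat) (A : 'M['F_2]_(n.+1)) (m : nat)
  (U : 'M['F_2]_(m, n.+1)) : Prop :=
  forall x : 'rV['F_2]_(n.+1), (x <= U)%MS -> qf A x = 0.

Definition proj_index (n : nat) (A : 'M['F_2]_(n.+1)) (g : nat) : Prop :=
  (exists U : 'M['F_2]_(n.+1), \rank U = g.+1 /\ contained A U) /\
  (forall U : 'M['F_2]_(n.+1), contained A U -> (\rank U <= g.+1)%N).

Definition generator (n : nat) (A : 'M['F_2]_(n.+1)) (g : nat)
  (G : 'M['F_2]_(n.+1)) : Prop :=
  \rank G = g.+1 /\ contained A G.

Definition type_ii (n : nat) (A : 'M['F_2]_(n.+1)) (alpha : 'M['F_2]_(n.+1))
  (X : 'rV['F_2]_(n.+1)) : Prop :=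
  [/\ X != 0, qf A X = 0, ~~ (X <= alpha)%MS & contained A (alpha + X)%MS].

From mathcomp Require Import all_boot all_order all_algebra.
From mathcomp Require Import ring zify.
Set Implicit Arguments. Unset Strict Implicit. Unset Printing Implicit Defensive.
Import GRing.Theory.
Local Open Scope ring_scope.

(* Let W be the part of the generator G polar to alpha. For a symmetric
   bilinear form, dim (G ∩ alpha^⊥) + dim alpha = dim (alpha ∩ G^⊥) + dim G,
   and G ⊆ G^⊥ because G lies on the quadric; as dim alpha < dim G this forces
   dim W > dim (alpha ∩ G), so W ⊄ alpha. Any point X of W outside alpha lies
   on the quadric and is polar to alpha, hence <alpha, X> lies on the quadric
   too. *)

Section PolarSpace.
Variables (F : fieldType) (n : nat) (B : 'M[F]_n).
Hypothesis symB : B^T = B.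

Definition orthmx m (U : 'M_(m, n)) : 'M_n := kermx (B *m U^T).

Lemma sub_orthmx m p (U : 'M_(m, n)) (V : 'M_(p, n)) :
  (V <= orthmx U)%MS = (V *m B *m U^T == 0).
Proof. by rewrite sub_kermx mulmxA. Qed.

Lemma mxrank_cap_orthmx m p (U : 'M_(m, n)) (V : 'M_(p, n)) :
  (\rank (U :&: orthmx V) + \rank V = \rank (V :&: orthmx U) + \rank U)%N.
Proof.
have rkUV : \rank (U *m (B *m V^T)) = \rank (V *m (B *m U^T)).
  by rewrite -mxrank_tr !trmx_mul trmxK symB mulmxA.
rewrite /orthmx -(mxrank_mul_ker U (B *m V^T)) -(mxrank_mul_ker V (B *m U^T)) rkUV.
by rewrite [LHS]addnC [RHS]addnCA addnA.
Qed.

End PolarSpace.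

Lemma mul_tr_entry (R : nzRingType) m p k (M : 'M[R]_(m, k)) (N : 'M[R]_(p, k)) i j :
  (M *m N^T) i j = (row i M *m (row j N)^T) 0 0.
Proof. by rewrite !mxE; apply: eq_bigr => l _; rewrite !mxE. Qed.

Section QuadricF2.
Variables (n : nat) (A : 'M['F_2]_(n.+1)).

Local Notation polarB := (A + A^T).

Lemma polarB_sym : polarB^T = polarB.
Proof. by rewrite linearD /= trmxK addrC. Qed.

Lemma polarE x y : polar A x y = (x *m polarB *m y^T) 0 0.
Proof.
rewrite /polar /qf linearD /= !mulmxDl !mulmxDr !mulmxDl.
have -> : y *m A *m x^T = (x *m A^T *m y^T)^T by rewrite !trmx_mul !trmxK mulmxA.
by rewrite !mxE; ring.
Qed.

Lemma qfD x y : qf A (x + y) = qf A x + qf A y + polar A x y.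
Proof. by rewrite /polar; ring. Qed.

Lemma contained_sub m p (U : 'M_(m, n.+1)) (V : 'M_(p, n.+1)) :
  (V <= U)%MS -> contained A U -> contained A V.
Proof. by move=> VU cU x xV; apply: cU; apply: submx_trans VU. Qed.

Lemma contained_orthmx m (U : 'M_(m, n.+1)) :
  contained A U -> (U <= orthmx polarB U)%MS.
Proof.
move=> cU; rewrite sub_orthmx; apply/eqP/matrixP => i j.
rewrite mul_tr_entry row_mul -polarE /polar !mxE.
by rewrite !cU ?addmx_sub ?row_sub // !subr0.
Qed.

Lemma contained_addsmx m p (U : 'M_(m, n.+1)) (V : 'M_(p, n.+1)) :
  contained A U -> contained A V -> (V <= orthmx polarB U)%MS ->
  contained A (U + V)%MS.
Proof.
move=> cU cV; rewrite sub_orthmx => /eqP VU0 x /sub_addsmxP [[u v] ->] /=.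
rewrite addrC qfD polarE (cU _ (submxMl u U)) (cV _ (submxMl v V)).
have -> : v *m V *m polarB *m (u *m U)^T = v *m (V *m polarB *m U^T) *m u^T.
  by rewrite trmx_mul !mulmxA.
by rewrite VU0 mulmx0 mul0mx mxE !add0r.
Qed.

End QuadricF2.

Theorem lemma5p3 (n : nat) (A : 'M['F_2]_(n.+1)) (g s : nat)
  (alpha : 'M['F_2]_(n.+1)) :
  nonsingular A -> proj_index A g -> (1 <= g)%N -> (s < g)%N ->
  \rank alpha = s.+1 -> contained A alpha ->
  forall G : 'M['F_2]_(n.+1), generator A g G ->
    exists X : 'rV['F_2]_(n.+1), (X <= G)%MS /\ type_ii A alpha X.
Proof.
move=> _ _ _ lt_sg rk_alpha c_alpha G [rk_G c_G].
pose W := (G :&: orthmx (A + A^T) alpha)%MS.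
have rk_W : (\rank (alpha :&: G) < \rank W)%N.
  have := mxrank_cap_orthmx (polarB_sym A) G alpha.
  have := mxrankS (capmxS (submx_refl alpha) (contained_orthmx c_G)).
  by rewrite -/W rk_alpha rk_G; lia.
have /row_subPn [i Xalpha] : ~~ (W <= alpha)%MS.
  apply: contraTN rk_W => W_alpha; rewrite -leqNgt mxrankS //.
  by rewrite sub_capmx W_alpha capmxSl.
have XG : (row i W <= G)%MS := submx_trans (row_sub i W) (capmxSl _ _).
exists (row i W); split=> //; split=> //.
- by apply: contraNneq Xalpha => ->; rewrite sub0mx.
- exact: c_G.
- apply: contained_addsmx c_alpha (contained_sub XG c_G) _.
  exact: submx_trans (row_sub i W) (capmxSr _ _).
Qed.
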